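(* Let $S$ be a numerical semigroup of depth $q\ge 1$, with $\rho=qm-c$. For all $x,y\in S$, $$\delta(x+y)+q+1\ \ge\ \delta(x)+\delta(y)\ \ge\ \delta(x+y)+q-\min(\rho,1).$$
   Context: A numerical semigroup is a subset $S\subseteq\mathbb N$ containing $0$, closed under addition, with finite complement. Its multiplicity is $m=\min(S\setminus\{0\})$, its conductor is $c=\max(\mathbb Z\setminus S)+1$, its depth is $q=\lceil c/m\rceil$, and $\rho=qm-c\in[0,m)$. For $x\in S$, the depth $\delta(x)$ is the unique integer such that $x+\delta(x)m\in[c,c+m-1]$. *)

From mathcomp Require Import all_boot all_order all_algebra.
Set Implicit Arguments. Unset Strict Implicit. Unset Printing Implicit Defensive.
Import Order.TTheory GRing.Theory Num.Theory.

Definition numerical_semigroup (S : pred nat) : Prop :=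
  [/\ S 0%N,
      (forall x y, S x -> S y -> S (x + y)%N) &
      exists N, forall n, (N <= n)%N -> S n].

Definition is_multiplicity (S : pred nat) (m : nat) : Prop :=
  [/\ (0 < m)%N, S m & forall k, (0 < k < m)%N -> ~~ S k].

(* c = max (Z \ S) + 1, i.e. the least integer c >= 0 with [c, oo) inside S
   (c = 0 when S = N, since then max (Z \ S) = -1). *)
Definition is_conductor (S : pred nat) (c : nat) : Prop :=
  (forall n, (c <= n)%N -> S n) /\ ((0 < c)%N -> ~~ S c.-1).

(* depth q = ceil (c / m), for m > 0 *)
Definition sg_depth (m c : nat) : nat := ((c + m).-1 %/ m)%N.

Definition sg_rho (m c : nat) : nat := (sg_depth m c * m - c)%N.

Definition is_elt_depth (m c x : nat) (d : int) : Prop :=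
  ((c%:Z <= x%:Z + d * m%:Z) /\ (x%:Z + d * m%:Z <= c%:Z + m%:Z - 1))%R.

From mathcomp Require Import all_boot all_order all_algebra.
From mathcomp Require Import zify ring.
Import Order.TTheory GRing.Theory Num.Theory.
Local Open Scope ring_scope.

(* Only the arithmetic of [m] and [c] matters.  If [k = δ(x) + δ(y) - δ(x+y)],
   then [k m = (x + δ(x) m) + (y + δ(y) m) - (x + y + δ(x+y) m)] is a combination
   of three numbers of [[c, c+m-1]], so [c - m < k m < c + 2m - 1].  Since
   [(q-1) m < c <= q m], with [c = q m] exactly when [ρ = 0], dividing by [m]
   confines [k] to [[q - min(ρ,1), q + 1]]. *)

Lemma elt_depth_defect_mul_bounds {m c x y : nat} {dx dy dxy : int} :
  is_elt_depth m c x dx -> is_elt_depth m c y dy ->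
  is_elt_depth m c (x + y) dxy ->
  c%:Z - m%:Z < (dx + dy - dxy) * m%:Z < c%:Z + 2 * m%:Z - 1.
Proof.
move=> [lo_x hi_x] [lo_y hi_y] [lo_xy hi_xy].
have -> : (dx + dy - dxy) * m%:Z =
    (x%:Z + dx * m%:Z) + (y%:Z + dy * m%:Z) - ((x + y)%:Z + dxy * m%:Z).
  by rewrite PoszD; ring.
by apply/andP; split; lia.
Qed.

Section DepthConductor.

Context (c : nat) {m : nat}.
Hypothesis m_gt0 : (0 < m)%N.

Local Notation q := (sg_depth m c).
Local Notation rho := (sg_rho m c).

Lemma conductor_le_depth_mul : (c <= q * m)%N.
Proof.
have := ltn_ceil (c + m).-1 m_gt0; rewrite -/(sg_depth m c); lia.
Qed.

Lemma depth_mul_lt_conductorD : (q * m < c + m)%N.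
Proof.
have := leq_divM (c + m).-1 m; rewrite -/(sg_depth m c); lia.
Qed.

Lemma depth_mul_eq_conductor : rho = 0%N -> (q * m)%N = c.
Proof.
move=> /eqP; rewrite /sg_rho subn_eq0 => le_qm_c.
by apply/eqP; rewrite eqn_leq le_qm_c conductor_le_depth_mul.
Qed.

Lemma depth_rho_lower_mul :
  (q%:Z - 1 - (minn rho 1)%:Z) * m%:Z <= c%:Z - m%:Z.
Proof.
have lt_qm := depth_mul_lt_conductorD.
have [rho0 | rho_gt0] := posnP rho.
  by rewrite rho0 min0n subr0 mulrBl mul1r -PoszM depth_mul_eq_conductor.
rewrite (minn_idPr rho_gt0).
have -> : (q%:Z - 1 - 1) * m%:Z = (q * m)%N%:Z - 2 * m%:Z by rewrite PoszM; ring.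
lia.
Qed.

End DepthConductor.

Theorem proposition2p5 (S : pred nat) (m c : nat)
  (hS : numerical_semigroup S) (hm : is_multiplicity S m) (hc : is_conductor S c)
  (hq : (1 <= sg_depth m c)%N)
  (x y : nat) (dx dy dxy : int)
  (hx : S x) (hy : S y)
  (hdx : is_elt_depth m c x dx) (hdy : is_elt_depth m c y dy)
  (hdxy : is_elt_depth m c (x + y) dxy) :
  dx + dy <= dxy + (sg_depth m c)%:Z + 1 /\
  dxy + (sg_depth m c)%:Z - (minn (sg_rho m c) 1)%:Z <= dx + dy.
Proof.
case: hm => m_gt0 _ _.
have m_gt0_int : 0 < m%:Z by rewrite ltz_nat.
have /andP[lo hi] := elt_depth_defect_mul_bounds hdx hdy hdxy.
set k := dx + dy - dxy in lo hi.
have k_lt : k < (sg_depth m c)%:Z + 2.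
  rewrite -(ltr_pM2r m_gt0_int).
  have := conductor_le_depth_mul c m_gt0; lia.
have k_gt : (sg_depth m c)%:Z - 1 - (minn (sg_rho m c) 1)%:Z < k.
  rewrite -(ltr_pM2r m_gt0_int).
  exact: le_lt_trans (depth_rho_lower_mul c m_gt0) lo.
rewrite /k in k_lt k_gt; split; lia.
Qed.
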